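(* For any $C^\infty$-ring $A$ and ideal $I\le A$ there are inclusions $\sqrt I\subseteq\sqrt[\infty]{I}\subseteq J(I)\subseteq J_{\mathbb R}(I)$, and each of these three inclusions can be strict (for suitable $A$ and $I$).
   Context: A $C^\infty$-ring is a product-preserving functor from the category of $\mathbb R^n$ ($n\ge0$) and smooth maps to sets; ideals are ideals of the underlying commutative $\mathbb R$-algebra; $A\{a^{-1}\}$ is the $C^\infty$-ring obtained by universally inverting $a$ among $C^\infty$-rings. For an ideal $I$: $\sqrt I$ is the nilradical $\{f\mid\exists k\ge1, f^k\in I\}$; $\sqrt[\infty]{I}:=\{f\in A\mid (A/I)\{f^{-1}\}\cong 0\}$; $J(I)$ is the intersection of all maximal ideals containing $I$; $J_{\mathbb R}(I)$ is the intersection of all maximal ideals containing $I$ whose residue field is $\mathbb R$ (an empty intersection being $A$). *)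

From HB Require Import structures.
From mathcomp Require Import all_boot all_order all_algebra.
From mathcomp Require Import all_classical all_reals all_analysis.
From mathcomp Require Import Rstruct Rstruct_topology.
From Stdlib Require Import Rdefinitions.

Set Implicit Arguments.
Unset Strict Implicit.
Unset Printing Implicit Defensive.

Import Order.TTheory GRing.Theory Num.Theory.
Import numFieldNormedType.Exports.
Local Open Scope ring_scope.

Notation RR := Rdefinitions.R.

Fixpoint Ck (k : nat) (n : nat) (f : 'rV[RR]_n -> RR^o) : Prop :=
  match k with
  | 0 => continuous f
  | k'.+1 => (forall x, differentiable f x) /\
             (forall i : 'I_n, Ck k' (fun x => derive f x (delta_mx 0 i)))
  end.

Definition smooth (n : nat) (f : 'rV[RR]_n -> RR^o) : Prop := forall k, Ck k f.

(** ** C^oo-rings, presented as algebras for the Lawvere theory of smooth maps: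
    for each smooth f : R^n -> R an n-ary operation Phi_f : A^n -> A,
    compatible with projections and composition.  (This is the same data as a
    product-preserving functor Euc -> Set, with A = F(R).)  The operation is
    given on all functions R^n -> R for convenience; only its values on smooth
    functions are constrained and used. *)
Record CinfRing := {
  carrier :> Type;
  Phi : forall n : nat, ('rV[RR]_n -> RR) -> ('I_n -> carrier) -> carrier;
  Phi_proj : forall n (i : 'I_n) (a : 'I_n -> carrier),
      Phi (fun x => x 0 i) a = a i;
  Phi_comp : forall n m (f : 'rV[RR]_m -> RR) (g : 'I_m -> 'rV[RR]_n -> RR)
      (a : 'I_n -> carrier),
      smooth f -> (forall j, smooth (g j)) ->
      Phi (fun x => f (\row_j g j x)) a = Phi f (fun j => Phi (g j) a)
}.

Definition cinf_hom (A B : CinfRing) (phi : A -> B) : Prop :=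
  forall n (f : 'rV[RR]_n -> RR) (a : 'I_n -> A),
    smooth f -> phi (Phi f a) = Phi f (fun i => phi (a i)).


Definition no_args (T : Type) : 'I_0 -> T.
Proof. by case. Defined.

Definition args2 (T : Type) (a b : T) : 'I_2 -> T :=
  fun i => if val i == 0%N then a else b.

Section Alg.
Variable A : CinfRing.
Definition cconst (r : RR) : A := Phi (fun _ : 'rV[RR]_0 => r) (@no_args A).
Definition czero : A := cconst 0.
Definition cone : A := cconst 1.
Definition cadd (a b : A) : A :=
  Phi (fun x : 'rV[RR]_2 => x 0 0 + x 0 1) (args2 a b).
Definition csub (a b : A) : A :=
  Phi (fun x : 'rV[RR]_2 => x 0 0 - x 0 1) (args2 a b).
Definition cmul (a b : A) : A :=
  Phi (fun x : 'rV[RR]_2 => x 0 0 * x 0 1) (args2 a b).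
Definition cpow (a : A) (k : nat) : A := iter k (cmul a) cone.
End Alg.

Section Ideals.
Variable A : CinfRing.

Definition ideal (I : A -> Prop) : Prop :=
  [/\ I (czero A), (forall a b, I a -> I b -> I (cadd a b))
    & (forall a b, I b -> I (cmul a b))].

Definition maximal_ideal (m : A -> Prop) : Prop :=
  [/\ ideal m, ~ m (cone A) &
      forall m' : A -> Prop, ideal m' -> (forall a, m a -> m' a) -> ~ m' (cone A) ->
        forall a, m' a -> m a].

(** residue field A/m is R : the map R -> A/m is onto *)
Definition residue_R (m : A -> Prop) : Prop :=
  forall a : A, exists r : RR, m (csub a (cconst A r)).

Definition nilrad (I : A -> Prop) (f : A) : Prop :=
  exists k : nat, leq 1 k /\ I (cpow f k).

(** C^oo-radical:  f such that (A/I){f^-1} = 0.  By the universal property of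
    A/I and of the C^oo-localization, this says: every C^oo-ring morphism
    phi : A -> B killing I and making phi f invertible has B the zero ring. *)
Definition cinf_rad (I : A -> Prop) (f : A) : Prop :=
  forall (B : CinfRing) (phi : A -> B), cinf_hom phi ->
    (forall x, I x -> phi x = czero B) ->
    (exists g : B, cmul (phi f) g = cone B) ->
    cone B = czero B.

Definition jac (I : A -> Prop) (f : A) : Prop :=
  forall m, maximal_ideal m -> (forall x, I x -> m x) -> m f.

Definition jacR (I : A -> Prop) (f : A) : Prop :=
  forall m, maximal_ideal m -> residue_R m -> (forall x, I x -> m x) -> m f.
End Ideals.

Definition incl_pred (T : Type) (P Q : T -> Prop) : Prop := forall x, P x -> Q x.

From HB Require Import structures.
From mathcomp Require Import all_boot all_order all_algebra.
From mathcomp Require Import all_classical all_reals all_analysis.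
From mathcomp Require Import Rstruct Rstruct_topology.
From mathcomp Require Import ring lra.

Set Implicit Arguments.
Unset Strict Implicit.
Unset Printing Implicit Defensive.
Import Order.TTheory GRing.Theory Num.Theory.
Import numFieldNormedType.Exports.
Local Open Scope ring_scope.
Local Open Scope classical_set_scope.

(* The underlying R-algebra of a C^oo-ring is a commutative ring, so a
   C^oo-morphism inverting [f] and killing a power of [f] has zero target.
   A maximal ideal [m] is a C^oo-congruence, so [A/m] is a nonzero C^oo-ring in
   which every [f] outside [m] becomes invertible; hence the C^oo-radical of [I]
   lies in every maximal ideal containing [I].
   For strictness let [t] be the identity of R.  In C^0(R), [t] is in the
   C^oo-radical of the multiples of exp(-1/|t|), because exp(-1/|x|) + (xy - 1)^2
   never vanishes, but no power of [t] is such a multiple.  In C^0(R), the only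
   maximal ideal containing the functions vanishing near 0 is the ideal of 0,
   yet [t] is invertible among right germs at 0.  In R^N the eventually zero
   sequences lie in a maximal ideal, but in none with residue field R, since
   [n - r] is eventually invertible. *)

Lemma Ck_continuous k n (f : 'rV[RR]_n -> RR^o) : Ck k f -> continuous f.
Proof. by case: k => [//|k] [df _] x; exact: differentiable_continuous. Qed.

Lemma CkS_Ck k n (f : 'rV[RR]_n -> RR^o) : Ck k.+1 f -> Ck k f.
Proof.
elim: k n f => [|k IH] n f [df df_Ck]; first by move=> x; exact: differentiable_continuous.
by split => // i; exact: IH (df_Ck i).
Qed.

Lemma eq_Ck k n (f g : 'rV[RR]_n -> RR^o) : f =1 g -> Ck k f -> Ck k g.
Proof. by move=> /funext ->. Qed.

Lemma Ck_cst k n (c : RR) : Ck k (fun _ : 'rV[RR]_n => c : RR^o).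
Proof.
elim: k c => [|k IH] c /=; first exact: cst_continuous.
split=> [x|i]; first exact: differentiable_cst.
by apply: eq_Ck (IH 0) => x /=; rewrite (derive_cst (c : RR^o)).
Qed.

Definition rproj n (i : 'I_n) := fun x : 'rV[RR]_n => (x 0 i : RR^o).

Lemma derive_rproj n (i : 'I_n) x v : derive (rproj i) x v = v 0 i.
Proof.
have @f : {linear 'rV[RR]_n -> RR^o}.
  by exists (fun N : 'rV[RR]_n => (N 0 i : RR^o)); do 2![eexists]; do ?[constructor];
     rewrite ?mxE// => ? *; rewrite ?mxE//; move=> ?; rewrite !mxE.
have -> : rproj i = f by [].
rewrite deriveE; last exact/linear_differentiable/coord_continuous.
by rewrite diff_lin //; exact: coord_continuous.
Qed.

Lemma Ck_rproj k n (i : 'I_n) : Ck k (rproj i).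
Proof.
case: k => [|k] /=; first exact: coord_continuous.
split=> [x|j]; first exact: differentiable_coord.
apply: eq_Ck (Ck_cst k _ ((delta_mx 0 j : 'rV[RR]_n) 0 i)) => x /=.
by rewrite derive_rproj.
Qed.

Lemma row_fun_sum n (T : Type) (g : 'I_n -> T -> RR) :
  (fun t => \row_j g j t) = \sum_j (fun t => g j t *: (delta_mx 0 j : 'rV[RR]_n)).
Proof.
apply/funext => t; rewrite fct_sumE (row_sum_delta (\row_j g j t)).
by apply: eq_bigr => i _; rewrite mxE.
Qed.

Lemma continuous_row (T : topologicalType) n (g : 'I_n -> T -> RR) :
  (forall j, continuous (g j)) -> continuous (fun t => \row_j g j t).
Proof.
move=> cg; rewrite row_fun_sum fct_sumE => t.
elim: (index_enum _) => [|j s IH].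
  by under eq_fun do rewrite big_nil; exact: cst_continuous.
under eq_fun do rewrite big_cons.
by apply: continuousD IH; apply: continuousZr_tmp; exact: cg.
Qed.

Lemma differentiable_row n m (g : 'I_m -> 'rV[RR]_n -> RR^o) x :
  (forall j, differentiable (g j) x) -> differentiable (fun t => \row_j g j t) x.
Proof.
move=> dg; rewrite row_fun_sum; apply: differentiable_sum => j.
exact: differentiableZl.
Qed.

Lemma derive_comp_row n m (f : 'rV[RR]_m -> RR^o) (g : 'I_m -> 'rV[RR]_n -> RR^o) x v :
  differentiable f (\row_j g j x) -> (forall j, differentiable (g j) x) ->
  derive (fun y => f (\row_j g j y)) x v =
  \sum_j derive f (\row_j g j x) (delta_mx 0 j) * derive (g j) x v.
Proof.
move=> df dg; pose h y := \row_j g j y.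
have dh : differentiable h x := differentiable_row dg.
rewrite -[fun y => _]/(f \o h) deriveE; last exact: differentiable_comp.
rewrite diff_comp //= -(deriveE v dh) derive_mx; last exact: diff_derivable.
rewrite [X in 'd f _ X]row_sum_delta linear_sum; apply: eq_bigr => j _.
rewrite linearZ /= -(deriveE _ df) mxE mulrC; congr (_ * _).
by congr (derive _ x v); apply/funext => t; rewrite /h mxE.
Qed.

Lemma ord2P (j : 'I_2) : j = 0 \/ j = 1.
Proof. by case: j => [[|[|//]] hj]; [left|right]; apply/val_inj. Qed.

Lemma Ck_mul2 k : Ck k (fun x : 'rV[RR]_2 => x 0 0 * x 0 1 : RR^o).
Proof.
have -> : (fun x : 'rV[RR]_2 => x 0 0 * x 0 1 : RR^o) = rproj 0 * rproj 1 by [].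
have d x : differentiable (rproj 0 * rproj 1 : _ -> RR^o) x.
  by apply: differentiableM; exact: differentiable_coord.
case: k => [|k] /=; first by move=> x; exact: differentiable_continuous.
split=> // j; apply: eq_Ck (Ck_rproj k (if j == 0 then 1 else 0)) => x.
rewrite deriveM; try exact/diff_derivable/differentiable_coord.
rewrite !derive_rproj !mxE /rproj /=.
by case: (ord2P j) => -> /=; rewrite scaler0 ?add0r ?addr0 [_ *: _]mulr1.
Qed.

Lemma Ck_add2 k : Ck k (fun x : 'rV[RR]_2 => x 0 0 + x 0 1 : RR^o).
Proof.
have -> : (fun x : 'rV[RR]_2 => x 0 0 + x 0 1 : RR^o) = rproj 0 + rproj 1 by [].
have d x : differentiable (rproj 0 + rproj 1 : _ -> RR^o) x.
  by apply: differentiableD; exact: differentiable_coord.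
case: k => [|k] /=; first by move=> x; exact: differentiable_continuous.
split=> // j; apply: eq_Ck (Ck_cst k 2 1) => x.
rewrite deriveD; try exact/diff_derivable/differentiable_coord.
by rewrite !derive_rproj !mxE; case: (ord2P j) => ->; rewrite /= ?addr0 ?add0r.
Qed.

Definition Ck_comp_closed k := forall n m (f : 'rV[RR]_m -> RR^o) (g : 'I_m -> 'rV[RR]_n -> RR^o),
  Ck k f -> (forall j, Ck k (g j)) -> Ck k (fun x => f (\row_j g j x)).

(* Arithmetic at level [k] only needs closure under composition at level [k],
   which is what the induction proving [Ck_comp] provides. *)
Section CkArith.
Variable k : nat.
Hypothesis Ck_comp : Ck_comp_closed k.

Lemma Ck_binop n (op : RR -> RR -> RR) (F G : 'rV[RR]_n -> RR^o) :
  Ck k (fun x : 'rV[RR]_2 => op (x 0 0) (x 0 1) : RR^o) -> Ck k F -> Ck k G ->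
  Ck k (fun x => op (F x) (G x) : RR^o).
Proof.
move=> cop cF cG; have cFG j : Ck k (args2 F G j) by rewrite /args2; case: ifP.
by apply: eq_Ck (Ck_comp cop cFG) => x; rewrite !mxE.
Qed.

Lemma CkM_of_comp n (F G : 'rV[RR]_n -> RR^o) :
  Ck k F -> Ck k G -> Ck k (fun x => F x * G x).
Proof. exact: Ck_binop (Ck_mul2 k). Qed.

Lemma Ck_sum_of_comp n (I : Type) (s : seq I) (F : I -> 'rV[RR]_n -> RR^o) :
  (forall i, Ck k (F i)) -> Ck k (fun x => \sum_(i <- s) F i x).
Proof.
move=> cF; elim: s => [|i s IH].
  by apply: eq_Ck (Ck_cst k n 0) => x; rewrite big_nil.
by apply: eq_Ck (Ck_binop (Ck_add2 k) (cF i) IH) => x; rewrite big_cons.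
Qed.

End CkArith.

Lemma Ck_comp k : Ck_comp_closed k.
Proof.
elim: k => [|k IH] n m f g.
  move=> /= cf cg x.
  by apply: (@continuous_comp _ _ _ (fun y => \row_j g j y) f x); [exact: continuous_row|exact: cf].
move=> [df df_Ck] cg; have dg j x : differentiable (g j) x := (cg j).1 x.
split=> [x|i].
  rewrite -[fun y => _]/(f \o (fun y => \row_j g j y)).
  by apply: differentiable_comp; [exact: differentiable_row | exact: df].
have dfg_Ck j : Ck k (fun x => derive f (\row_j g j x) (delta_mx 0 j)).
  by apply: IH (df_Ck j) _ => j'; exact: CkS_Ck.
apply: eq_Ck (Ck_sum_of_comp IH _ (fun j => CkM_of_comp IH (dfg_Ck j) ((cg j).2 i))) => x.
by rewrite derive_comp_row.
Qed.

Lemma CkM k n (F G : 'rV[RR]_n -> RR^o) : Ck k F -> Ck k G -> Ck k (fun x => F x * G x).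
Proof. exact: (CkM_of_comp (@Ck_comp k)). Qed.

Lemma Ck_sum k n (I : Type) (s : seq I) (F : I -> 'rV[RR]_n -> RR^o) :
  (forall i, Ck k (F i)) -> Ck k (fun x => \sum_(i <- s) F i x).
Proof. exact: (Ck_sum_of_comp (@Ck_comp k)). Qed.

Lemma CkD k n (F G : 'rV[RR]_n -> RR^o) : Ck k F -> Ck k G -> Ck k (fun x => F x + G x).
Proof. exact: Ck_binop (@Ck_comp k) _ _ _ _ (Ck_add2 k). Qed.

Lemma CkN k n (F : 'rV[RR]_n -> RR^o) : Ck k F -> Ck k (fun x => - F x).
Proof. by move=> cF; apply: eq_Ck (CkM (Ck_cst k n (-1)) cF) => x; rewrite mulN1r. Qed.

Lemma CkV k n (S : 'rV[RR]_n -> RR^o) : Ck k S -> (forall x, S x != 0) ->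
  Ck k (fun x => (S x)^-1).
Proof.
elim: k n S => [|k IH] n S cS S0; first by move=> x; apply: continuousV => //; exact: cS.
have dS x : differentiable S x := cS.1 x.
split=> [x|i]; first exact: differentiableV.
have cS' : Ck k S := CkS_Ck cS.
apply: eq_Ck (CkM (CkN (CkM (IH _ _ cS' S0) (IH _ _ cS' S0))) (cS.2 i)) => x /=.
by rewrite deriveV //; [rewrite -exprVn expr2 | exact: diff_derivable].
Qed.

Section SmoothArith.
Variable n : nat.
Implicit Types F G S : 'rV[RR]_n -> RR^o.

Lemma eq_smooth F G : F =1 G -> smooth F -> smooth G.
Proof. by move=> /funext ->. Qed.

Lemma smooth_cst c : smooth (fun _ : 'rV[RR]_n => c : RR^o).
Proof. by move=> k; exact: Ck_cst. Qed.

Lemma smooth_rproj (i : 'I_n) : smooth (fun x : 'rV[RR]_n => x 0 i).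
Proof. by move=> k; exact: Ck_rproj. Qed.

Lemma smooth_comp m (f : 'rV[RR]_m -> RR^o) (g : 'I_m -> 'rV[RR]_n -> RR^o) :
  smooth f -> (forall j, smooth (g j)) -> smooth (fun x => f (\row_j g j x)).
Proof. by move=> sf sg k; exact: Ck_comp (sf k) (sg ^~ k). Qed.

Lemma smoothM F G : smooth F -> smooth G -> smooth (fun x => F x * G x).
Proof. by move=> sF sG k; exact: CkM. Qed.

Lemma smoothD F G : smooth F -> smooth G -> smooth (fun x => F x + G x).
Proof. by move=> sF sG k; exact: CkD. Qed.

Lemma smoothN F : smooth F -> smooth (fun x => - F x).
Proof. by move=> sF k; exact: CkN. Qed.

Lemma smoothB F G : smooth F -> smooth G -> smooth (fun x => F x - G x).
Proof. by move=> sF sG; apply: smoothD => //; exact: smoothN. Qed.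

Lemma smooth_sum (I : Type) (s : seq I) (F : I -> 'rV[RR]_n -> RR^o) :
  (forall i, smooth (F i)) -> smooth (fun x => \sum_(i <- s) F i x).
Proof. by move=> sF k; exact: Ck_sum (sF ^~ k). Qed.

Lemma smoothV S : smooth S -> (forall x, S x != 0) -> smooth (fun x => (S x)^-1).
Proof. by move=> sS S0 k; exact: CkV. Qed.

End SmoothArith.

Section CinfAlgebra.
Variable B : CinfRing.

Lemma eq_Phi n (F G : 'rV[RR]_n -> RR) (a : 'I_n -> B) : F =1 G -> Phi F a = Phi G a.
Proof. by move=> /funext ->. Qed.

Lemma Phi_binop n (op : RR -> RR -> RR) (F G : 'rV[RR]_n -> RR^o) (a : 'I_n -> B) :
  smooth (fun x : 'rV[RR]_2 => op (x 0 0) (x 0 1) : RR^o) -> smooth F -> smooth G ->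
  Phi (fun x => op (F x) (G x)) a =
  Phi (fun x : 'rV[RR]_2 => op (x 0 0) (x 0 1)) (args2 (Phi F a) (Phi G a)).
Proof.
move=> sop sF sG.
have -> : args2 (Phi F a) (Phi G a) = fun j => Phi (args2 F G j) a.
  by apply/funext => j; rewrite /args2; case: ifP.
rewrite -Phi_comp //; last by move=> j; rewrite /args2; case: ifP.
by apply: eq_Phi => x; rewrite !mxE.
Qed.

Lemma PhiD n (F G : 'rV[RR]_n -> RR^o) (a : 'I_n -> B) : smooth F -> smooth G ->
  Phi (fun x => F x + G x) a = cadd (Phi F a) (Phi G a).
Proof. by apply: (Phi_binop (op := +%R)); apply: smoothD; exact: smooth_rproj. Qed.

Lemma PhiB n (F G : 'rV[RR]_n -> RR^o) (a : 'I_n -> B) : smooth F -> smooth G ->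
  Phi (fun x => F x - G x) a = csub (Phi F a) (Phi G a).
Proof. by apply: (Phi_binop (op := fun x y => x - y)); apply: smoothB; exact: smooth_rproj. Qed.

Lemma PhiM n (F G : 'rV[RR]_n -> RR^o) (a : 'I_n -> B) : smooth F -> smooth G ->
  Phi (fun x => F x * G x) a = cmul (Phi F a) (Phi G a).
Proof. by apply: (Phi_binop (op := *%R)); apply: smoothM; exact: smooth_rproj. Qed.

Lemma Phi_cst n (c : RR) (a : 'I_n -> B) : Phi (fun _ => c) a = cconst B c.
Proof.
have /= -> := @Phi_comp B n 0 (fun _ => c) (fun _ _ => 0) a (smooth_cst 0 c) (fun=> smooth_cst n 0).
by congr (Phi _ _); apply/funext => -[].
Qed.

Lemma Phi_unit n (S : 'rV[RR]_n -> RR^o) (a : 'I_n -> B) :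
  smooth S -> (forall x, S x != 0) ->
  cmul (Phi S a) (Phi (fun x => (S x)^-1) a) = cone B.
Proof.
move=> sS S0; rewrite -PhiM //; last exact: smoothV.
by rewrite /cone -(Phi_cst 1 a); apply: eq_Phi => x; rewrite mulfV.
Qed.

Definition args3 (x y z : B) : 'I_3 -> B :=
  fun i => if val i == 0%N then x else if val i == 1%N then y else z.

Lemma args3E (x y z : B) :
  [/\ x = Phi (fun v : 'rV[RR]_3 => v 0 0) (args3 x y z),
      y = Phi (fun v : 'rV[RR]_3 => v 0 1) (args3 x y z) &
      z = Phi (fun v : 'rV[RR]_3 => v 0 2) (args3 x y z)].
Proof. by rewrite !Phi_proj. Qed.

Definition copp (x : B) := csub (czero B) x.

Ltac smooth_tac := repeat first [apply: smoothD | apply: smoothM | apply: smoothB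
  | apply: smoothN | apply: smooth_rproj | apply: smooth_cst].

(* Each law is an identity of polynomials, transported along Phi. *)
Ltac cinf_law x y z := let w := fresh "w" in
  case: (args3E x y z); move: (args3 x y z) => w -> -> ->;
  try rewrite /copp; try rewrite /czero; try rewrite /cone;
  rewrite -?(Phi_cst _ w) -?PhiB; try smooth_tac;
  rewrite -?PhiD; try smooth_tac; rewrite -?PhiM; try smooth_tac;
  rewrite -?PhiD; try smooth_tac; apply: eq_Phi => v /=.

Lemma caddA (x y z : B) : cadd x (cadd y z) = cadd (cadd x y) z.
Proof. by cinf_law x y z; rewrite addrA. Qed.

Lemma caddC (x y : B) : cadd x y = cadd y x.
Proof. by cinf_law x y x; rewrite addrC. Qed.

Lemma cadd0l (x : B) : cadd (czero B) x = x.
Proof. by cinf_law x x x; rewrite add0r. Qed.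

Lemma caddNl (x : B) : cadd (copp x) x = czero B.
Proof. by cinf_law x x x; rewrite add0r addNr. Qed.

Lemma cmulA (x y z : B) : cmul x (cmul y z) = cmul (cmul x y) z.
Proof. by cinf_law x y z; rewrite mulrA. Qed.

Lemma cmulC (x y : B) : cmul x y = cmul y x.
Proof. by cinf_law x y x; rewrite mulrC. Qed.

Lemma cmul1l (x : B) : cmul (cone B) x = x.
Proof. by cinf_law x x x; rewrite mul1r. Qed.

Lemma cmulDl (x y z : B) : cmul (cadd x y) z = cadd (cmul x z) (cmul y z).
Proof. by cinf_law x y z; rewrite mulrDl. Qed.

Lemma csubE (x y : B) : csub x y = cadd x (copp y).
Proof. by cinf_law x y x; rewrite add0r. Qed.

End CinfAlgebra.

Definition cring (B : CinfRing) : Type := carrier B.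
HB.instance Definition _ (B : CinfRing) := gen_eqMixin (cring B).
HB.instance Definition _ (B : CinfRing) := gen_choiceMixin (cring B).
HB.instance Definition _ (B : CinfRing) :=
  GRing.isZmodule.Build (cring B) (@caddA B) (@caddC B) (@cadd0l B) (@caddNl B).
HB.instance Definition _ (B : CinfRing) :=
  GRing.Zmodule_isComPzRing.Build (cring B) (@cmulA B) (@cmulC B) (@cmul1l B) (@cmulDl B).

Section CringE.
Variable B : CinfRing.
Lemma caddE (x y : B) : cadd x y = (x : cring B) + (y : cring B). Proof. by []. Qed.
Lemma cmulE (x y : B) : cmul x y = (x : cring B) * (y : cring B). Proof. by []. Qed.
Lemma czeroE : czero B = 0 :> cring B. Proof. by []. Qed.
Lemma coneE : cone B = 1 :> cring B. Proof. by []. Qed.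
Lemma csubrE (x y : B) : csub x y = (x : cring B) - (y : cring B). Proof. exact: csubE. Qed.
Lemma cpowE (x : B) k : cpow x k = (x : cring B) ^+ k.
Proof. by elim: k => [|k IH] //=; rewrite IH cmulE exprS. Qed.
End CringE.

Ltac to_ring := rewrite ?caddE ?cmulE ?czeroE ?coneE ?csubrE ?cpowE;
  match goal with |- @eq (carrier ?B) ?a ?b => change (@eq (cring B) a b) end.

Section Homomorphisms.
Variables (A B : CinfRing) (phi : A -> B).
Hypothesis phi_hom : cinf_hom phi.

Lemma cinf_hom_args2 (x y : A) : (fun i => phi (args2 x y i)) = args2 (phi x) (phi y).
Proof. by apply/funext => i; rewrite /args2; case: ifP. Qed.

Lemma cinf_homM x y : phi (cmul x y) = cmul (phi x) (phi y).
Proof.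
rewrite /cmul phi_hom ?cinf_hom_args2 //.
by apply: smoothM; exact: smooth_rproj.
Qed.

Lemma cinf_homD x y : phi (cadd x y) = cadd (phi x) (phi y).
Proof.
rewrite /cadd phi_hom ?cinf_hom_args2 //.
by apply: smoothD; exact: smooth_rproj.
Qed.

Lemma cinf_homB x y : phi (csub x y) = csub (phi x) (phi y).
Proof.
rewrite /csub phi_hom ?cinf_hom_args2 //.
by apply: smoothB; exact: smooth_rproj.
Qed.

Lemma cinf_hom_cst r : phi (cconst A r) = cconst B r.
Proof.
rewrite /cconst phi_hom; last exact: smooth_cst.
by congr (Phi _ _); apply/funext => -[].
Qed.

Lemma cinf_homX x k : phi (cpow x k) = cpow (phi x) k.
Proof. by elim: k => [|k IH] /=; [exact: cinf_hom_cst | rewrite cinf_homM IH]. Qed.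

End Homomorphisms.

Section Ideals.
Variables (A : CinfRing) (J : A -> Prop).
Hypothesis J_ideal : ideal J.

Lemma ideal0 : J (czero A). Proof. by case: J_ideal. Qed.
Lemma idealD x y : J x -> J y -> J (cadd x y). Proof. by case: J_ideal => _ h _; apply: h. Qed.
Lemma idealMl x y : J y -> J (cmul x y). Proof. by case: J_ideal => _ _ h; apply: h. Qed.
Lemma idealMr x y : J x -> J (cmul x y). Proof. by rewrite cmulC; exact: idealMl. Qed.

Lemma idealN x : J x -> J (csub (czero A) x).
Proof.
have -> : csub (czero A) x = cmul (csub (czero A) (cone A)) x by to_ring; ring.
exact: idealMl.
Qed.

Lemma ideal_Phi_sum n (I : Type) (s : seq I) (F : I -> 'rV[RR]_n -> RR^o) (w : 'I_n -> A) :
  (forall i, smooth (F i)) -> (forall i, J (Phi (F i) w)) ->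
  J (Phi (fun v => \sum_(i <- s) F i v) w).
Proof.
move=> sF JF; elim: s => [|i s IH].
  by under eq_Phi do rewrite big_nil; rewrite Phi_cst; exact: ideal0.
under eq_Phi do rewrite big_cons.
by rewrite PhiD //; [exact: idealD | exact: smooth_sum].
Qed.

End Ideals.

Lemma cinf_hom_comp (A B C : CinfRing) (phi : A -> B) (psi : B -> C) :
  cinf_hom phi -> cinf_hom psi -> cinf_hom (psi \o phi).
Proof. by move=> phi_hom psi_hom n f a sf /=; rewrite phi_hom // psi_hom. Qed.

Lemma ideal_preimage (A B : CinfRing) (phi : A -> B) (J : B -> Prop) :
  cinf_hom phi -> ideal J -> ideal (J \o phi).
Proof.
move=> phi_hom J_ideal; split=> [|x y Jx Jy|x y Jy] /=.
- by rewrite (cinf_hom_cst phi_hom); exact: ideal0.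
- by rewrite (cinf_homD phi_hom); exact: idealD.
- by rewrite (cinf_homM phi_hom); exact: idealMl.
Qed.

Definition cinf_congruence (A : CinfRing) (J : A -> Prop) :=
  forall n (f : 'rV[RR]_n -> RR) (a b : 'I_n -> A), smooth f ->
    (forall i, J (csub (a i) (b i))) -> J (csub (Phi f a) (Phi f b)).

Section Quotient.
Variables (A : CinfRing) (J : A -> Prop).
Hypotheses (J_ideal : ideal J) (J_congr : cinf_congruence J).

Definition eqmod (x y : A) := J (csub x y).

Lemma eqmod_refl x : eqmod x x.
Proof. by rewrite /eqmod (_ : csub x x = czero A); [exact: ideal0 | to_ring; ring]. Qed.

Lemma eqmod_sym x y : eqmod x y -> eqmod y x.
Proof.
by rewrite /eqmod (_ : csub y x = csub (czero A) (csub x y)); [exact: idealN | to_ring; ring].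
Qed.

Lemma eqmod_trans x y z : eqmod x y -> eqmod y z -> eqmod x z.
Proof.
by rewrite /eqmod (_ : csub x z = cadd (csub x y) (csub y z)); [exact: idealD | to_ring; ring].
Qed.

(* The quotient is realised as the set of canonical representatives, one
   chosen in each class. *)
Definition canon (x : A) : A := proj1_sig (cid (ex_intro (eqmod^~ x) x (eqmod_refl x))).

Lemma canon_eqmod x : eqmod (canon x) x.
Proof. by rewrite /canon; case: cid. Qed.

Lemma canon_eq x y : eqmod x y -> canon x = canon y.
Proof.
move=> xy; rewrite /canon; move: (ex_intro _ _ _) (ex_intro _ _ _).
have -> : eqmod^~ x = eqmod^~ y.
  apply/funext => z; apply/propext; split => h; first exact: eqmod_trans h xy.
  exact: eqmod_trans h (eqmod_sym xy).
by move=> p q; rewrite (Prop_irrelevance p q).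
Qed.

Definition quot_carrier := {x : A | canon x = x}.

Definition qpi (x : A) : quot_carrier :=
  exist _ (canon x) (canon_eq (canon_eqmod x)).

Lemma qpi_val (q : quot_carrier) : qpi (proj1_sig q) = q.
Proof. by case: q => x hx; apply: eq_exist. Qed.

Lemma qpi_eq x y : eqmod x y -> qpi x = qpi y.
Proof. by move=> h; apply: eq_exist; exact: canon_eq. Qed.

Lemma qpi_eqmod x y : qpi x = qpi y -> eqmod x y.
Proof.
move=> /(congr1 (@proj1_sig _ _)) /= h.
by apply: eqmod_trans (eqmod_sym (canon_eqmod x)) _; rewrite h; exact: canon_eqmod.
Qed.

Definition quot_Phi n (f : 'rV[RR]_n -> RR) (a : 'I_n -> quot_carrier) :=
  qpi (Phi f (fun i => proj1_sig (a i))).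

Lemma quot_Phi_proj n (i : 'I_n) (a : 'I_n -> quot_carrier) :
  quot_Phi (fun x => x 0 i) a = a i.
Proof. by rewrite /quot_Phi Phi_proj qpi_val. Qed.

Lemma quot_Phi_comp n m (f : 'rV[RR]_m -> RR) (g : 'I_m -> 'rV[RR]_n -> RR)
    (a : 'I_n -> quot_carrier) :
  smooth f -> (forall j, smooth (g j)) ->
  quot_Phi (fun x => f (\row_j g j x)) a = quot_Phi f (fun j => quot_Phi (g j) a).
Proof.
move=> sf sg; rewrite /quot_Phi Phi_comp //; apply: qpi_eq; apply: J_congr => // j.
exact/eqmod_sym/canon_eqmod.
Qed.

Definition quotient : CinfRing := Build_CinfRing quot_Phi_proj quot_Phi_comp.

Lemma qpi_hom : cinf_hom (qpi : A -> quotient).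
Proof.
move=> n f a sf /=; rewrite /quot_Phi; apply: qpi_eq; apply: J_congr => // i.
exact/eqmod_sym/canon_eqmod.
Qed.

Lemma qpi_cst r : cconst quotient r = qpi (cconst A r).
Proof. by rewrite /cconst /= /quot_Phi; congr (qpi (Phi _ _)); apply/funext => -[]. Qed.

Lemma qpi0 : czero quotient = qpi (czero A). Proof. exact: qpi_cst. Qed.
Lemma qpi1 : cone quotient = qpi (cone A). Proof. exact: qpi_cst. Qed.

Lemma quotient_neq0 : ~ J (cone A) -> cone quotient <> czero quotient.
Proof.
rewrite qpi1 qpi0 => J1 /qpi_eqmod.
by rewrite /eqmod (_ : csub _ _ = cone A); [exact: J1 | to_ring; ring].
Qed.

Lemma qpi_killed x : J x -> (qpi x : quotient) = czero quotient.
Proof.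
rewrite qpi0 => Jx; apply: qpi_eq.
by rewrite /eqmod (_ : csub _ _ = x) //; to_ring; ring.
Qed.

End Quotient.

Section Join3.
Variables (T : Type) (n : nat).

Definition join3 (a b : 'I_n -> T) (y : T) : 'I_(n + n + 1) -> T :=
  fun j => match fintype.split j with
           | inl j1 => match fintype.split j1 with inl i => a i | inr i => b i end
           | inr _ => y
           end.

Definition idx_l (i : 'I_n) : 'I_(n + n + 1) := lshift 1 (lshift n i).
Definition idx_r (i : 'I_n) : 'I_(n + n + 1) := lshift 1 (rshift n i).
Definition idx_last : 'I_(n + n + 1) := rshift (n + n) (ord0 : 'I_1).

Lemma join3_l a b y i : join3 a b y (idx_l i) = a i.
Proof. by rewrite /join3 /idx_l !(unsplitK (inl _)). Qed.

Lemma join3_r a b y i : join3 a b y (idx_r i) = b i.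
Proof. by rewrite /join3 /idx_r (unsplitK (inl _)) (unsplitK (inr _)). Qed.

Lemma join3_last a b y : join3 a b y idx_last = y.
Proof. by rewrite /join3 /idx_last (unsplitK (inr _)). Qed.

End Join3.

Lemma sum_sqr_diff_neq0 n (f : 'rV[RR]_n -> RR) (p q : 'rV[RR]_n) (t : RR) :
  \sum_i (p 0 i - q 0 i) * (p 0 i - q 0 i) +
    ((f p - f q) * t - 1) * ((f p - f q) * t - 1) != 0.
Proof.
have sqr_ge0 (r : RR) : 0 <= r * r by rewrite -expr2 sqr_ge0.
rewrite paddr_eq0 ?sumr_ge0 //; apply/negP => /andP[/eqP d0 /eqP].
have -> : p = q.
  apply/rowP => i; apply/eqP; rewrite -subr_eq0 -[_ == 0]orbb -mulf_eq0.
  by apply/eqP; apply: (psumr_eq0P _ d0).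
by rewrite subrr mul0r sub0r mulrNN mulr1 => /eqP; rewrite oner_eq0.
Qed.

Section MaximalIdeals.
Variables (A : CinfRing) (m : A -> Prop).
Hypothesis m_max : maximal_ideal m.

Lemma maximal_ideal_inv c : ~ m c -> exists y h, m h /\ cone A = cadd h (cmul y c).
Proof.
have [m_ideal m1 m_maxl] := m_max => mc.
pose m' z := exists y h, m h /\ z = cadd h (cmul y c).
have m'_ideal : ideal m'.
  split.
  - by exists (czero A), (czero A); split; [exact: ideal0 | to_ring; ring].
  - move=> u v [y1 [h1 [mh1 ->]]] [y2 [h2 [mh2 ->]]].
    by exists (cadd y1 y2), (cadd h1 h2); split; [exact: idealD | to_ring; ring].
  - move=> u v [y1 [h1 [mh1 ->]]].
    by exists (cmul u y1), (cmul u h1); split; [exact: idealMl | to_ring; ring].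
apply: contrapT => m'1; apply: mc; apply: (m_maxl m' m'_ideal) => //.
  by move=> u mu; exists (czero A), u; split => //; to_ring; ring.
by exists (cone A), (czero A); split; [exact: ideal0 | to_ring; ring].
Qed.

(* If [Phi f a - Phi f b] were invertible modulo [m], with inverse [y], the
   nowhere vanishing function [S] below would send [(a, b, y)] into [m]. *)
Lemma maximal_cinf_congruence : cinf_congruence m.
Proof.
move=> n f a b sf mab; have [m_ideal m1 _] := m_max.
apply: contrapT => /maximal_ideal_inv [y [h [mh y_inv]]].
pose w := join3 a b y.
pose fl (v : 'rV[RR]_(n + n + 1)) := f (\row_i v 0 (idx_l i)).
pose fr (v : 'rV[RR]_(n + n + 1)) := f (\row_i v 0 (idx_r i)).
pose d i (v : 'rV[RR]_(n + n + 1)) := v 0 (idx_l i) - v 0 (idx_r i).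
pose E v := (fl v - fr v) * v 0 (idx_last n) - 1.
pose S v := \sum_i d i v * d i v + E v * E v.
have sfl : smooth fl by apply: smooth_comp => // i; exact: smooth_rproj.
have sfr : smooth fr by apply: smooth_comp => // i; exact: smooth_rproj.
have sd i : smooth (d i) by apply: smoothB; exact: smooth_rproj.
have sE : smooth E.
  by apply: smoothB; [apply: smoothM; [exact: smoothB | exact: smooth_rproj] | exact: smooth_cst].
have sS : smooth S by apply: smoothD; [apply: smooth_sum => i | ]; exact: smoothM.
have S_neq0 v : S v != 0.
  have := sum_sqr_diff_neq0 f (\row_i v 0 (idx_l i)) (\row_i v 0 (idx_r i)) (v 0 (idx_last n)).
  by under eq_bigr do rewrite !mxE.
have Phi_fl : Phi fl w = Phi f a.
  rewrite (Phi_comp (g := fun i v => v 0 (idx_l i))) //; last by move=> i; exact: smooth_rproj.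
  by congr (Phi f _); apply/funext => i; rewrite Phi_proj /w join3_l.
have Phi_fr : Phi fr w = Phi f b.
  rewrite (Phi_comp (g := fun i v => v 0 (idx_r i))) //; last by move=> i; exact: smooth_rproj.
  by congr (Phi f _); apply/funext => i; rewrite Phi_proj /w join3_r.
have mE : m (Phi E w).
  have slast : smooth (fun v : 'rV[RR]_(n + n + 1) => v 0 (idx_last n)) := smooth_rproj _.
  rewrite /E (PhiB w (smoothM (smoothB sfl sfr) slast) (smooth_cst _ 1)).
  rewrite (PhiM w (smoothB sfl sfr) slast) (PhiB w sfl sfr) Phi_fl Phi_fr.
  rewrite Phi_proj /w join3_last Phi_cst -/(cone A) y_inv.
  rewrite (_ : csub _ _ = csub (czero A) h); first exact: idealN.
  by to_ring; ring.
have mS : m (Phi S w).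
  rewrite /S (PhiD w _ (smoothM sE sE)); last by apply: smooth_sum => i; exact: smoothM.
  apply: (idealD m_ideal); last by rewrite (PhiM w sE sE); exact: idealMl.
  apply: (ideal_Phi_sum m_ideal) => [i|i]; first exact: smoothM.
  rewrite (PhiM w (sd i) (sd i)) /d (PhiB w (smooth_rproj _) (smooth_rproj _)).
  by rewrite !Phi_proj /w join3_l join3_r; exact: idealMl.
by apply: m1; rewrite -(Phi_unit w sS S_neq0); exact: idealMr.
Qed.

End MaximalIdeals.

Section RadicalInclusions.
Variables (A : CinfRing) (I : A -> Prop).

Lemma nilrad_sub_cinf_rad : incl_pred (nilrad I) (cinf_rad I).
Proof.
move=> f [k [k_gt0 Ifk]] B phi phi_hom phiI [g fg].
have fk0 : cpow (phi f) k = czero B by rewrite -cinf_homX // phiI.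
have e : cpow (cmul (phi f) g) k = cmul (cpow (phi f) k) (cpow g k).
  by to_ring; exact: exprMn.
by move: e; rewrite fg fk0 !cpowE cmulE czeroE coneE expr1n mul0r.
Qed.

Lemma cinf_rad_sub_jac : incl_pred (cinf_rad I) (jac I).
Proof.
move=> f f_rad m m_max Im; have [m_ideal m1 _] := m_max.
apply: contrapT => /(maximal_ideal_inv m_max) [y [h [mh y_inv]]].
have m_congr := maximal_cinf_congruence m_max.
apply: (@quotient_neq0 _ _ m_ideal m_congr m1).
apply: (f_rad _ _ (qpi_hom m_ideal m_congr)) => [x Ix|].
  exact/(qpi_killed m_ideal m_congr)/Im.
exists (qpi m_ideal y); rewrite -(cinf_homM (qpi_hom m_ideal m_congr)) qpi1.
apply: qpi_eq; rewrite /eqmod y_inv (_ : csub _ _ = csub (czero A) h).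
  exact: idealN.
by to_ring; ring.
Qed.

Lemma jac_sub_jacR : incl_pred (jac I) (jacR I).
Proof. by move=> f f_jac m m_max _; exact: f_jac. Qed.

End RadicalInclusions.

Definition expinv (m : nat) (t : RR^o) : RR^o := t^-1 ^+ m * expR (- t^-1).

Definition flat (m : nat) (t : RR^o) : RR^o := if 0 < t then expinv m t else 0.

Lemma is_derive_expinv m (t : RR^o) : t != 0 ->
  is_derive t 1 (expinv m) (- m%:R * expinv m.+1 t + expinv m.+2 t).
Proof.
move=> t0.
have hinv : is_derive t (1 : RR^o) (fun s : RR^o => s^-1) (- t ^- 2 *: 1) by exact: is_deriveV.
have hexp := @is_derive1_comp _ expR (fun s : RR^o => - s^-1) t _ _
  (is_derive_expR (- t^-1)) (is_deriveN hinv).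
have -> : expinv m = (fun s : RR^o => s^-1) ^+ m * (expR \o (fun s => - s^-1)).
  by apply/funext => s; rewrite /expinv /= exprfctE.
apply: is_derive_eq; rewrite /expinv /= !exprfctE /=.
case: m => [|m] /=; rewrite -!exprVn /GRing.scale /=;
  match goal with |- @eq _ ?a ?b => change (@eq RR a b) end;
  set y := t^-1; set E := expR (- y); rewrite !exprS ?expr0; ring.
Qed.

Lemma exprn_expRN_le n (s : RR) : 0 < s -> s ^+ n * expR (- s) <= n.+1`!%:R / s.
Proof.
move=> s0; have K0 : (0 : RR) < n.+1`!%:R by rewrite ltr0n fact_gt0.
have : s ^+ n.+1 / n.+1`!%:R <= expR s.
  by apply: le_trans (expR_ge1Dxn n (ltW s0)); rewrite lerDr.
rewrite ler_pdivrMr // ler_pdivlMr // expRN mulrAC -exprSr ler_pdivrMr ?expR_gt0 //.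
by rewrite mulrC.
Qed.

Lemma flat_derive0 m :
  (fun h : RR^o => h^-1 *: (flat m (h *: 1 + 0) - flat m 0)) @ 0^' --> (0 : RR^o).
Proof.
apply/cvgrPdist_le => e e0; pose K : RR := m.+2`!%:R.
have K0 : 0 < K by rewrite ltr0n fact_gt0.
near=> h.
have hK : `|h| < e / K by near: h; apply: dnbhs0_lt; exact: divr_gt0.
rewrite /flat ltxx subr0 sub0r normrN addr0 /GRing.scale /= mulr1.
case: ifP => h0; last by rewrite mulr0 normr0 ltW.
have s0 : 0 < h^-1 by rewrite invr_gt0.
rewrite /expinv mulrA -exprS ger0_norm; last by rewrite mulr_ge0 ?exprn_ge0 ?expR_ge0 ?ltW.
apply: le_trans (exprn_expRN_le _ s0) _; rewrite invrK mulrC.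
by move: hK; rewrite gtr0_norm // ltr_pdivlMr // => /ltW.
Unshelve. all: by end_near. Qed.

Lemma is_derive_flat m (t : RR^o) :
  is_derive t 1 (flat m) (- m%:R * flat m.+1 t + flat m.+2 t).
Proof.
have [t0|t0|->] := ltgtP t 0.
- have flat0 k u : u <= 0 -> flat k u = 0 by rewrite /flat leNgt => /negbTE ->.
  rewrite !flat0 ?ltW // mulr0 addr0.
  apply: near_eq_is_derive (is_derive_cst 0 t 1).
  by near=> u; rewrite flat0 // ltW //; near: u; exact: lt_nbhsl.
- rewrite /flat t0; apply: near_eq_is_derive (is_derive_expinv m (lt0r_neq0 t0)).
  by near=> u; rewrite /flat ifT //; near: u; exact: lt_nbhsr.
- rewrite /flat ltxx mulr0 add0r; apply: DeriveDef.
    by apply/cvg_ex; exists 0; exact: flat_derive0.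
  exact/cvg_lim/flat_derive0.
Unshelve. all: by end_near. Qed.

Lemma derivable_flat m (t : RR^o) : derivable (flat m) t 1.
Proof. by have [] := is_derive_flat m t. Qed.

Lemma smooth_flat m : smooth (fun v : 'rV[RR]_1 => flat m (v 0 0)).
Proof.
have dflat m' x : differentiable (fun v : 'rV[RR]_1 => flat m' (v 0 0) : RR^o) x.
  rewrite -[fun v => _]/(flat m' \o rproj 0); apply: differentiable_comp.
    exact: differentiable_coord.
  exact/derivable1_diffP/derivable_flat.
move=> k; elim: k m => [|k IH] m; first by move=> x; exact: differentiable_continuous.
split=> // i; apply: eq_Ck (CkD (CkM (Ck_cst k 1 (- m%:R)) (IH m.+1)) (IH m.+2)) => x.
rewrite (ord1 i) deriveE // -[fun v => _]/(flat m \o rproj 0) diff_comp; last 2 first.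
- exact: differentiable_coord.
- exact/derivable1_diffP/derivable_flat.
rewrite /= -(deriveE _ (differentiable_coord x 0 0)) derive_rproj mxE /=.
by rewrite (deriv1E (@derivable_flat m _)) /= derive1E (is_derive_flat m _).(derive_val) scale1r.
Qed.

(* Zorn's lemma is applied to the sets [K] making [I `|` K] a proper ideal,
   so that the union of the empty chain is admissible. *)
Lemma maximal_ideal_above (A : CinfRing) (I : A -> Prop) : ideal I -> ~ I (cone A) ->
  exists m, maximal_ideal m /\ forall x, I x -> m x.
Proof.
move=> I_ideal I1.
pose P := fun K : set A => ideal (I `|` K) /\ ~ (I `|` K) (cone A).
have [F F_P F_chain|K [[IK_ideal IK1] K_max]] := @Zorn_bigcup A P.
  pose U := \bigcup_(X in F) X.
  have lift Z x : F Z -> (I `|` Z) x -> (I `|` U) x.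
    by move=> FZ [Ix|Zx]; [left|right; exists Z].
  have F_ideal Z : F Z -> ideal (I `|` Z) by move=> /F_P [].
  split; last by move=> [//|[X FX X1]]; apply: (F_P X FX).2; right.
  split=> [|a b [Ia|[X FX Xa]] [Ib|[Y FY Yb]]|a b [Ib|[Y FY Yb]]].
  - by left; exact: ideal0.
  - by left; exact: idealD.
  - by apply: (lift Y) => //; apply: (idealD (F_ideal _ FY)); [left|right].
  - by apply: (lift X) => //; apply: (idealD (F_ideal _ FX)); [right|left].
  - have [XY|YX] := F_chain _ _ FX FY.
      by apply: (lift Y) => //; apply: (idealD (F_ideal _ FY)); right => //; exact: XY.
    by apply: (lift X) => //; apply: (idealD (F_ideal _ FX)); right => //; exact: YX.
  - by left; exact: idealMl.
  - by apply: (lift Y) => //; apply: (idealMl (F_ideal _ FY)); right.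
exists (I `|` K); split=> [|x Ix]; last by left.
split=> // m' m'_ideal IKm' m'1 a m'a; apply: contrapT => IKa.
have Im' : I `|` m' = m'.
  by apply/seteqP; split=> x; [case=> // Ix; apply: IKm'; left | right].
apply: (K_max m'); last by split; rewrite Im'.
split=> [x Kx|]; first by apply: IKm'; right.
by move=> /(_ a m'a) Ka; apply: IKa; right.
Qed.

Section FunCinf.
Variable X : Type.

Definition fun_Phi n (f : 'rV[RR]_n -> RR) (a : 'I_n -> X -> RR) : X -> RR :=
  fun t => f (\row_i a i t).

Lemma fun_Phi_proj n (i : 'I_n) (a : 'I_n -> X -> RR) : fun_Phi (fun x => x 0 i) a = a i.
Proof. by apply/funext => t; rewrite /fun_Phi mxE. Qed.

Lemma fun_Phi_comp n m (f : 'rV[RR]_m -> RR) (g : 'I_m -> 'rV[RR]_n -> RR)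
    (a : 'I_n -> X -> RR) :
  smooth f -> (forall j, smooth (g j)) ->
  fun_Phi (fun x => f (\row_j g j x)) a = fun_Phi f (fun j => fun_Phi (g j) a).
Proof. by []. Qed.

Definition fun_cinf : CinfRing := Build_CinfRing fun_Phi_proj fun_Phi_comp.

Lemma fun_caddE (a b : fun_cinf) t : (cadd a b : X -> RR) t = a t + b t.
Proof. by rewrite /cadd /= /fun_Phi !mxE. Qed.
Lemma fun_csubE (a b : fun_cinf) t : (csub a b : X -> RR) t = a t - b t.
Proof. by rewrite /csub /= /fun_Phi !mxE. Qed.
Lemma fun_cmulE (a b : fun_cinf) t : (cmul a b : X -> RR) t = a t * b t.
Proof. by rewrite /cmul /= /fun_Phi !mxE. Qed.
Lemma fun_cconstE r t : (cconst fun_cinf r : X -> RR) t = r.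
Proof. by []. Qed.

End FunCinf.

Section Germs.
Context (X : Type) (F : set_system X) {F_filter : Filter F}.

Definition germ0 (h : fun_cinf X) : Prop := \forall x \near F, h x = 0.

Lemma germ0_ideal : ideal germ0.
Proof.
split=> [|a b|a b]; first by near=> x.
- by apply: filterS2 => x ax bx; rewrite fun_caddE ax bx addr0.
- by apply: filterS => x bx; rewrite fun_cmulE bx mulr0.
Unshelve. all: by end_near. Qed.

Lemma germ0_congruence : cinf_congruence germ0.
Proof.
move=> n f a b _ /filter_forall; apply: filterS => x ab.
rewrite fun_csubE /= /fun_Phi; apply/eqP; rewrite subr_eq0; apply/eqP; congr f.
by apply/rowP => i; rewrite !mxE; apply/eqP; rewrite -subr_eq0 -fun_csubE ab.
Qed.

Lemma one_not_germ0 : ProperFilter F -> ~ germ0 (cone (fun_cinf X)).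
Proof. by move=> F_proper /filter_ex [x]; rewrite /cone fun_cconstE => /eqP; rewrite oner_eq0. Qed.

End Germs.

Definition cont_fun := {h : RR -> RR | continuous h}.

(* [cont_Phi] returns the junk value 0 when the composite is discontinuous,
   which can only happen for non-smooth [f]. *)
Definition cont_Phi n (f : 'rV[RR]_n -> RR) (a : 'I_n -> cont_fun) : cont_fun :=
  match pselect (continuous (fun t => f (\row_i proj1_sig (a i) t))) with
  | left f_cont => exist _ _ f_cont
  | right _ => exist _ (fun _ : RR => 0 : RR) (@cst_continuous _ _ (0 : RR))
  end.

Lemma cont_fun_ext (u v : cont_fun) : proj1_sig u =1 proj1_sig v -> u = v.
Proof. by case: u => u hu; case: v => v hv /= /funext uv; apply: eq_exist. Qed.

Lemma cont_PhiE n (f : 'rV[RR]_n -> RR) a : smooth f ->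
  proj1_sig (cont_Phi f a) = fun t => f (\row_i proj1_sig (a i) t).
Proof.
move=> sf; rewrite /cont_Phi; case: pselect => // -[] x.
apply: (@continuous_comp _ _ _ (fun t => \row_i proj1_sig (a i) t) f x).
  by apply: continuous_row => i; exact: (proj2_sig (a i)).
exact: Ck_continuous (sf 0%N) _.
Qed.

Lemma cont_Phi_proj n (i : 'I_n) (a : 'I_n -> cont_fun) : cont_Phi (fun x => x 0 i) a = a i.
Proof. by apply: cont_fun_ext => t; rewrite cont_PhiE ?mxE //; exact: smooth_rproj. Qed.

Lemma cont_Phi_comp n m (f : 'rV[RR]_m -> RR) (g : 'I_m -> 'rV[RR]_n -> RR)
    (a : 'I_n -> cont_fun) :
  smooth f -> (forall j, smooth (g j)) ->
  cont_Phi (fun x => f (\row_j g j x)) a = cont_Phi f (fun j => cont_Phi (g j) a).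
Proof.
move=> sf sg; apply: cont_fun_ext => t; rewrite !cont_PhiE //; last exact: smooth_comp.
by congr f; apply/rowP => j; rewrite !mxE cont_PhiE.
Qed.

Definition cont_cinf : CinfRing := Build_CinfRing cont_Phi_proj cont_Phi_comp.

Definition cval (g : cont_cinf) : fun_cinf RR := proj1_sig g.

Lemma cval_continuous (g : cont_cinf) : continuous (cval g).
Proof. exact: proj2_sig g. Qed.

Lemma cval_hom : cinf_hom cval.
Proof. by move=> n f a sf; exact: cont_PhiE. Qed.

Lemma cont_caddE (a b : cont_cinf) t : cval (cadd a b) t = cval a t + cval b t.
Proof. by rewrite (cinf_homD cval_hom) fun_caddE. Qed.
Lemma cont_csubE (a b : cont_cinf) t : cval (csub a b) t = cval a t - cval b t.
Proof. by rewrite (cinf_homB cval_hom) fun_csubE. Qed.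
Lemma cont_cmulE (a b : cont_cinf) t : cval (cmul a b) t = cval a t * cval b t.
Proof. by rewrite (cinf_homM cval_hom) fun_cmulE. Qed.
Lemma cont_cconstE r t : cval (cconst cont_cinf r) t = r.
Proof. by rewrite (cinf_hom_cst cval_hom). Qed.
Lemma cont_cpowE (a : cont_cinf) k t : cval (cpow a k) t = cval a t ^+ k.
Proof. by elim: k => [|k IH] /=; rewrite ?cont_cconstE // cont_cmulE IH exprS. Qed.

Lemma continuous_idR : continuous (fun t : RR => t).
Proof. by move=> x; exact: cvg_id. Qed.

Definition cont_id : cont_cinf := exist _ (fun t : RR => t) continuous_idR.

Lemma eventually_zero_no_real_point (m : fun_cinf nat -> Prop) :
  maximal_ideal m -> (forall x, germ0 \oo x -> m x) -> ~ residue_R m.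
Proof.
move=> [m_ideal m1 _] Im m_real; pose a : fun_cinf nat := fun n : nat => n%:R : RR.
have [r mr] := m_real a.
pose e : fun_cinf nat := fun n : nat => if n%:R - r == 0 then 1 else 0.
pose u : fun_cinf nat := fun n : nat => if n%:R - r == 0 then 0 else (n%:R - r)^-1.
have e_germ0 : germ0 \oo e.
  by apply: filterS (nbhs_infty_gtr r) => n rn; rewrite /e subr_eq0 gt_eqF.
apply: m1; have -> : cone (fun_cinf nat) = cadd e (cmul u (csub a (cconst _ r))).
  apply/funext => n; rewrite fun_caddE fun_cmulE fun_csubE /e /u.
  by case: eqP => [->|/eqP n_r]; rewrite ?mul0r ?addr0 ?add0r ?mulVf.
by apply: (idealD m_ideal); [exact: Im | exact: idealMl].
Qed.

Lemma jacR_not_sub_jac :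
  exists (A : CinfRing) (I : A -> Prop), ideal I /\ ~ incl_pred (jacR I) (jac I).
Proof.
exists (fun_cinf nat), (germ0 \oo); split=> [|jacR_jac]; first exact: germ0_ideal.
have [m [m_max Im]] := maximal_ideal_above (@germ0_ideal _ \oo _) (one_not_germ0 _).
have [_ m1 _] := m_max; apply: m1; apply: jacR_jac m_max Im => m' m'_max m'_real Im'.
by case: (eventually_zero_no_real_point m'_max Im').
Qed.

Lemma continuous_inv_near (v : RR -> RR) (x : RR) : continuous v -> v x != 0 ->
  exists2 w : RR -> RR, continuous w & \forall t \near x, v t * w t = 1.
Proof.
move=> v_cont vx; pose sq t := v t * v t; pose c := sq x / 4.
have sqx : 0 < sq x by rewrite /sq -expr2 exprn_even_gt0.
have c_gt0 : 0 < c by rewrite divr_gt0.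
have sq_cont : continuous sq by move=> t; exact: (continuousM (v_cont t) (v_cont t)).
pose mx t := Num.max (sq t) c.
have mx_gt0 t : 0 < mx t by rewrite lt_max c_gt0 orbT.
have mx_cont : continuous mx.
  by move=> t; apply: (@continuous_max _ _ sq (fun=> c)); [exact: sq_cont | exact: cst_continuous].
exists (fun t => v t / mx t).
  move=> t; apply: (@continuousM _ _ v (fun t => (mx t)^-1)); first exact: v_cont.
  by apply: continuousV; [rewrite gt_eqF | exact: mx_cont].
have : c < sq x by rewrite ltr_pdivrMr // ltr_pMr ?ltr1n.
move=> /(cvgr_gt _ (sq_cont x)); apply: filterS => t ct.
by rewrite /mx max_l ?ltW // mulrA mulfV // gt_eqF // (lt_trans c_gt0).
Qed.

Definition germ_at0 (g : cont_cinf) : Prop := germ0 (nbhs (0 : RR)) (cval g).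

Lemma germ_at0_ideal : ideal germ_at0.
Proof. exact: ideal_preimage cval_hom (@germ0_ideal _ (nbhs (0 : RR)) _). Qed.

Lemma maximal_above_germ_at0_vanish (m : cont_cinf -> Prop) :
  maximal_ideal m -> (forall g, germ_at0 g -> m g) -> forall g, m g -> cval g 0 = 0.
Proof.
move=> [m_ideal m1 _] Im g mg; apply/eqP/negP => /negP g0.
have [w w_cont gw] := continuous_inv_near (@cval_continuous g) g0.
pose h : cont_cinf := exist _ w w_cont.
apply: m1; rewrite (_ : cone _ = cadd (csub (cone _) (cmul g h)) (cmul g h)).
  apply: (idealD m_ideal); last exact: idealMr.
  apply: Im; apply: filterS gw => t gwt.
  by rewrite cont_csubE cont_cmulE cont_cconstE gwt subrr.
by to_ring; ring.
Qed.

Lemma jac_germ_at0_id : jac germ_at0 cont_id.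
Proof.
move=> m m_max Im; have [_ m1 m_maxl] := m_max.
have m0_ideal : ideal (fun g : cont_cinf => cval g 0 = 0).
  split=> [|a b a0 b0|a b b0]; first exact: cont_cconstE.
  - by rewrite cont_caddE a0 b0 addr0.
  - by rewrite cont_cmulE b0 mulr0.
apply: (m_maxl _ m0_ideal (maximal_above_germ_at0_vanish m_max Im)) => //.
by rewrite cont_cconstE => /eqP; rewrite oner_eq0.
Qed.

(* In the ring of right germs at 0 of all real functions, [t] becomes invertible. *)
Lemma not_cinf_rad_germ_at0_id : ~ cinf_rad germ_at0 cont_id.
Proof.
have right0_proper := at_right_proper_filter (0 : RR).
have right0_filter := @filter_filter _ _ right0_proper.
pose J := @germ0 RR 0^'+.
have J_ideal : ideal J := germ0_ideal (F_filter := right0_filter).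
have J_congr : cinf_congruence J := germ0_congruence (F_filter := right0_filter).
have phi_hom := cinf_hom_comp cval_hom (qpi_hom J_ideal J_congr).
move=> /(_ _ _ phi_hom) id_rad.
apply: (quotient_neq0 (one_not_germ0 right0_proper)); apply: id_rad.
  move=> g g0; apply: qpi_killed; near=> t.
  by near: t; apply: cvg_within; exact: g0.
exists (qpi J_ideal ((fun t => t^-1) : fun_cinf RR)).
change ((qpi J_ideal \o cval) cont_id) with (qpi J_ideal (cval cont_id)).
rewrite -(cinf_homM (qpi_hom J_ideal J_congr)) qpi1; apply: qpi_eq.
near=> t; rewrite fun_csubE fun_cmulE /= mulfV ?subrr //.
Unshelve. all: by end_near. Qed.

Lemma jac_not_sub_cinf_rad :
  exists (A : CinfRing) (I : A -> Prop), ideal I /\ ~ incl_pred (jac I) (cinf_rad I).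
Proof.
exists cont_cinf, germ_at0; split; first exact: germ_at0_ideal.
by move=> /(_ _ jac_germ_at0_id); exact: not_cinf_rad_germ_at0_id.
Qed.

Definition flat_abs (t : RR) : RR := flat 0 t + flat 0 (- t).

Lemma smooth_flat_abs : smooth (fun v : 'rV[RR]_1 => flat_abs (v 0 0)).
Proof.
apply: smoothD; first exact: smooth_flat.
apply: eq_smooth (smooth_comp (g := fun _ v => - v 0 0) (smooth_flat 0) _) => [v|_].
  by rewrite mxE.
by apply: smoothN; exact: smooth_rproj.
Qed.

Lemma flat_abs_gt0E t : 0 < t -> flat_abs t = expR (- t^-1).
Proof.
move=> t0; rewrite /flat_abs /flat t0 ifF; last by rewrite oppr_gt0 ltNge ltW.
by rewrite addr0 /expinv expr0 mul1r.
Qed.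

Lemma flat_abs_neq0 t : t != 0 -> flat_abs t != 0.
Proof.
rewrite /flat_abs /flat /expinv !expr0 !mul1r oppr_gt0.
by case: ltgtP => // _ _; rewrite ?addr0 ?add0r gt_eqF ?expR_gt0.
Qed.

Lemma flat_abs_ge0 t : 0 <= flat_abs t.
Proof.
rewrite /flat_abs /flat /expinv !expr0 !mul1r.
by apply: addr_ge0; case: ifP => // _; exact: expR_ge0.
Qed.

Definition flat_multiple (h : cont_cinf) : Prop :=
  exists c : cont_cinf, forall t, cval h t = cval c t * flat_abs t.

Lemma flat_multiple_ideal : ideal flat_multiple.
Proof.
split=> [|a b [c ac] [d bd]|a b [c bc]].
- by exists (czero cont_cinf) => t; rewrite !cont_cconstE mul0r.
- by exists (cadd c d) => t; rewrite !cont_caddE ac bd mulrDl.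
- by exists (cmul a c) => t; rewrite !cont_cmulE bc mulrA.
Qed.

(* In a C^oo-ring killing [flat_abs t] and inverting [t] with inverse [u], the
   nowhere vanishing function [flat_abs x + (x y - 1)^2] vanishes at [(t, u)]. *)
Lemma cinf_rad_flat_multiple_id : cinf_rad flat_multiple cont_id.
Proof.
move=> B phi phi_hom phi_kill [u tu].
pose w := args2 (phi cont_id) u.
pose E (v : 'rV[RR]_2) := v 0 0 * v 0 1 - 1.
pose S (v : 'rV[RR]_2) := flat_abs (v 0 0) + E v * E v.
pose flat1 (v : 'rV[RR]_1) := flat_abs (v 0 0).
have s_flat1 : smooth flat1 := smooth_flat_abs.
have flat1E (v : 'rV[RR]_2) : flat_abs (v 0 0) = flat1 (\row_(j < 1) v 0 0) by rewrite /flat1 mxE.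
have s_flat : smooth (fun v : 'rV[RR]_2 => flat_abs (v 0 0)).
  apply: eq_smooth (smooth_comp s_flat1 (fun=> smooth_rproj 0)) => v.
  by rewrite flat1E.
have sE : smooth E.
  by apply: smoothB; [apply: smoothM; exact: smooth_rproj | exact: smooth_cst].
have sS : smooth S by apply: smoothD => //; exact: smoothM.
have S_neq0 v : S v != 0.
  have sqr_ge0 (r : RR) : 0 <= r * r by rewrite -expr2 sqr_ge0.
  rewrite paddr_eq0 ?flat_abs_ge0 //; apply/negP => /andP[/eqP flat0 /eqP].
  have v0 : v 0 0 = 0.
    by apply/eqP; apply: contraLR (@flat_abs_neq0 (v 0 0)) _; rewrite flat0.
  by rewrite /E v0 mul0r sub0r mulrNN mulr1 => /eqP; rewrite oner_eq0.
have Phi_flat : Phi (fun v : 'rV[RR]_2 => flat_abs (v 0 0)) w = czero B.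
  rewrite (eq_Phi _ flat1E) (Phi_comp (g := fun _ v => v 0 0)); last 2 first.
  - exact: s_flat1.
  - by move=> _; exact: smooth_rproj.
  have flat_t : flat_multiple (Phi flat1 (fun=> cont_id)).
    by exists (cone _) => t; rewrite cont_cconstE mul1r /cval /= cont_PhiE // /flat1 mxE.
  rewrite -(phi_kill _ flat_t) phi_hom //.
  by congr (Phi _ _); apply/funext => j; rewrite Phi_proj.
have Phi_E : Phi E w = czero B.
  rewrite /E (PhiB w (smoothM (smooth_rproj 0) (smooth_rproj 1)) (smooth_cst _ 1)).
  rewrite (PhiM w (smooth_rproj 0) (smooth_rproj 1)) !Phi_proj Phi_cst -/(cone B) /w /args2 /= tu.
  by to_ring; ring.
have := Phi_unit w sS S_neq0.
rewrite /S (PhiD w s_flat (smoothM sE sE)) (PhiM w sE sE) Phi_flat Phi_E => <-.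
by to_ring; ring.
Qed.

(* A continuous [c] with [t ^+ k = c t * exp (-1/t)] for [t > 0] would be
   unbounded near [0+]. *)
Lemma not_nilrad_flat_multiple_id : ~ nilrad flat_multiple cont_id.
Proof.
move=> [k [_ [c tk]]]; pose M := `|cval c 0| + 1; pose K : RR := k.+1`!%:R.
have M_gt0 : 0 < M by rewrite ltr_pwDr.
have K_gt0 : 0 < K by rewrite ltr0n fact_gt0.
have c_bound : \forall t \near (0 : RR)^'+, cval c t < M.
  apply: cvg_within; apply: (cvgr_lt _ (@cval_continuous c 0)).
  by rewrite (le_lt_trans (ler_norm _)) // ltrDl.
suff : \forall t \near (0 : RR)^'+, False by case/filter_ex.
near=> t.
have t_gt0 : 0 < t by near: t; exact: nbhs_right_gt.
have t_small : t * (M * K) < 1.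
  rewrite -ltr_pdivlMr ?mulr_gt0 // div1r; near: t.
  by apply: nbhs_right_lt; rewrite invr_gt0 mulr_gt0.
have s_gt0 : 0 < t^-1 by rewrite invr_gt0.
have := exprn_expRN_le k s_gt0; rewrite invrK => P_le.
have P_gt0 : 0 < t^-1 ^+ k * expR (- t^-1) by rewrite mulr_gt0 ?exprn_gt0 ?expR_gt0.
have cP : cval c t * (t^-1 ^+ k * expR (- t^-1)) = 1.
  have tkt : t ^+ k = cval c t * expR (- t^-1) by rewrite -flat_abs_gt0E // -tk cont_cpowE.
  by rewrite mulrCA -tkt -exprMn mulVf ?gt_eqF // expr1n.
have ct : cval c t < M by near: t.
nra.
Unshelve. all: by end_near. Qed.

Lemma cinf_rad_not_sub_nilrad :
  exists (A : CinfRing) (I : A -> Prop), ideal I /\ ~ incl_pred (cinf_rad I) (nilrad I).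
Proof.
exists cont_cinf, flat_multiple; split; first exact: flat_multiple_ideal.
by move=> /(_ _ cinf_rad_flat_multiple_id); exact: not_nilrad_flat_multiple_id.
Qed.

Theorem proposition2p2 :
  (forall (A : CinfRing) (I : A -> Prop), ideal I ->
     [/\ incl_pred (nilrad I) (cinf_rad I),
         incl_pred (cinf_rad I) (jac I)
       & incl_pred (jac I) (jacR I)]) /\
  [/\ (exists (A : CinfRing) (I : A -> Prop),
          ideal I /\ ~ incl_pred (cinf_rad I) (nilrad I)),
      (exists (A : CinfRing) (I : A -> Prop),
          ideal I /\ ~ incl_pred (jac I) (cinf_rad I))
    & (exists (A : CinfRing) (I : A -> Prop),
          ideal I /\ ~ incl_pred (jacR I) (jac I))].
Proof.
split=> [A I _|].
  by split; [exact: nilrad_sub_cinf_rad | exact: cinf_rad_sub_jac | exact: jac_sub_jacR].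
split; [exact: cinf_rad_not_sub_nilrad | exact: jac_not_sub_cinf_rad | exact: jacR_not_sub_jac].
Qed.
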